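(* Let $G$ be a $6$-regular graph, $\mathcal S$ a canonical path partition of $G$, and $P$ a path component with end-vertices $o_1,o_2$. Let $x_1,x_2\in V_2$ be path neighbors on $P$, with $x_1$ immediately preceding $x_2$ when $P$ is traversed from $o_1$ to $o_2$. If $x_1$ goes to a vertex of a cycle component $C$, then every vertex that $x_2$ goes to is either $o_2$ or a vertex of $C$.
   Context: All graphs are finite, simple and undirected. A path partition of $G=(V,E)$ is a set of vertex-disjoint paths (single vertices allowed) covering $V$; its members are components. A component with $t\ge3$ vertices is a cycle component if the subgraph induced on its vertex set has a spanning cycle; a one-vertex component is an isolated vertex; every other component is a path component. A path partition is canonical if (1) it has the minimum number of components among all path partitions of $G$; (2) among those, it has the maximum number of cycle components; (3) it has no isolated vertices. Given a canonical path partition $\mathcal S$ of $G$: two vertices are path neighbors if they are consecutive on a path component. An edge of $G$ is a free edge unless it joins two path neighbors or has both endpoints in the same cycle component. $V_1$ is the set of end-vertices of path components together with all vertices of cycle components. $V_2$ is the set of vertices not in $V_1$ that are joined by a free edge to a vertex of $V_1$. A balanced edge is a free edge with one endpoint in $V_1$ and the other in $V_2$; for $x\in V_2$, $y\in V_1$ we say $x$ goes to $y$ if $xy$ is a balanced edge. *)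

(* A finite simple graph is a symmetric irreflexive relation
   [e : rel T] on a finite type [T]. *)
From mathcomp Require Import all_boot.
Set Implicit Arguments. Unset Strict Implicit. Unset Printing Implicit Defensive.

Section PathPartitions.
Variables (T : finType) (e : rel T).

Definition is_gpath (s : seq T) : bool :=
  if s is x :: s' then uniq s && path e x s' else false.

(* A path partition: a list of vertex-disjoint paths covering V.  Since the
   components are nonempty, [uniq (flatten S)] gives vertex-disjointness
   (and that no component is listed twice). *)
Definition is_path_partition (S : seq (seq T)) : Prop :=
  all is_gpath S /\ uniq (flatten S) /\ (forall v : T, v \in flatten S).

(* Cycle component: at least 3 vertices, and the subgraph induced on its
   vertex set has a spanning cycle, i.e. some arrangement of its vertices
   is an e-cycle (closing edge included). *)
Definition is_cycle_comp (s : seq T) : bool :=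
  (3 <= size s) && has (cycle e) (permutations s).

Definition is_isolated_comp (s : seq T) : bool := size s == 1.

Definition is_path_comp (s : seq T) : bool :=
  (2 <= size s) && ~~ is_cycle_comp s.

Definition num_cycle_comps (S : seq (seq T)) : nat := count is_cycle_comp S.

Definition canonical_pp (S : seq (seq T)) : Prop :=
  [/\ is_path_partition S,
      (forall S', is_path_partition S' -> size S <= size S'),
      (forall S', is_path_partition S' -> size S' = size S ->
                  num_cycle_comps S' <= num_cycle_comps S)
    & ~~ has is_isolated_comp S].

Definition path_nbrs (S : seq (seq T)) (u v : T) : Prop :=
  exists2 s, s \in S & is_path_comp s /\
    exists i, i.+1 < size s /\
      ((nth u s i = u /\ nth u s i.+1 = v) \/ (nth u s i = v /\ nth u s i.+1 = u)).

Definition same_cycle_comp (S : seq (seq T)) (u v : T) : Prop :=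
  exists2 s, s \in S & [&& is_cycle_comp s, u \in s & v \in s].

Definition free_edge (S : seq (seq T)) (u v : T) : Prop :=
  e u v /\ ~ path_nbrs S u v /\ ~ same_cycle_comp S u v.

Definition inV1 (S : seq (seq T)) (v : T) : Prop :=
  exists2 s, s \in S &
    (is_path_comp s && ((v == head v s) || (v == last v s)))
    || (is_cycle_comp s && (v \in s)).

Definition inV2 (S : seq (seq T)) (x : T) : Prop :=
  ~ inV1 S x /\ exists y, inV1 S y /\ free_edge S x y.

Definition balanced_edge (S : seq (seq T)) (u v : T) : Prop :=
  free_edge S u v /\ ((inV1 S u /\ inV2 S v) \/ (inV2 S u /\ inV1 S v)).

Definition goes_to (S : seq (seq T)) (x y : T) : Prop :=
  inV2 S x /\ inV1 S y /\ balanced_edge S x y.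

End PathPartitions.

From mathcomp Require Import all_boot.
Set Implicit Arguments. Unset Strict Implicit. Unset Printing Implicit Defensive.

(* Cut [P] between [x1] and [x2] into [A], ending at [x1], and [B], starting
   at [x2], and let [x1 c] be the balanced edge into [C].  Suppose [x2] goes to
   [y], with [y] neither [o2] nor in [C].  If [y] lies on a component [Q] other
   than [P] and [C], traverse [Q] so that it ends at [y]: then [A] followed by
   a spanning path of [C] from [c], and [Q] followed by [B], cover [P], [C] and
   [Q] with two paths.  Otherwise [y] is an end of [P], so [y] is the first
   vertex of [A], and [C] traversed back to [c], then [A] backwards and then
   [B] form one path covering [P] and [C].  Either way the number of components
   of [S] was not minimal. *)

Section SeqFacts.
Variable T : eqType.

Lemma head_rev (x : T) s : head x (rev s) = last x s.
Proof. by case: s => // a s; rewrite [in LHS](lastI a s) rev_rcons. Qed.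

Lemma last_rev (x : T) s : last x (rev s) = head x s.
Proof. by case: s => // a s; rewrite rev_cons last_rcons. Qed.

Lemma head_cat (x : T) s1 s2 : head x (s1 ++ s2) = head (head x s2) s1.
Proof. by case: s1. Qed.

Lemma ends_rev (x : T) s :
  (x == head x (rev s)) || (x == last x (rev s)) = (x == head x s) || (x == last x s).
Proof. by rewrite head_rev last_rev orbC. Qed.

Lemma split_at_nth (s : seq T) x0 i : i.+1 < size s ->
  s = rcons (take i s) (nth x0 s i) ++ nth x0 s i.+1 :: drop i.+2 s.
Proof. by move=> lt_i1s; rewrite -take_nth 1?ltnW // -drop_nth // cat_take_drop. Qed.

Lemma uniq_flatten_mem (ss : seq (seq T)) s : s \in ss -> uniq (flatten ss) -> uniq s.
Proof.
elim: ss => //= a ss IH; rewrite in_cons cat_uniq.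
by case/orP=> [/eqP-> | s_ss] /and3P[a_u _ ss_u] //; apply: IH.
Qed.

Lemma perm_cat_compl (S K : seq T) :
  uniq K -> {subset K <= S} -> exists R, perm_eq S (K ++ R).
Proof.
elim: K S => [|a K IH] S /=; first by exists S.
case/andP=> aNK K_u sub_aKS.
have aS : a \in S by apply: sub_aKS; rewrite inE eqxx.
have S_rem := perm_to_rem aS.
have [|R remR] := IH (rem a S) K_u.
  move=> b bK; have : b \in a :: rem a S by rewrite -(perm_mem S_rem) sub_aKS ?inE ?bK ?orbT.
  by rewrite inE => /predU1P[ba|//]; move: aNK; rewrite -ba bK.
by exists R; rewrite (perm_trans S_rem) // perm_cons.
Qed.

End SeqFacts.

Section Walks.
Variables (T : finType) (e : rel T).

Definition is_walk (s : seq T) : bool := if s is x :: s' then path e x s' else false.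

Lemma is_gpathE s : is_gpath e s = uniq s && is_walk s.
Proof. by case: s. Qed.

Lemma mem_gpaths_walk S s : all (is_gpath e) S -> s \in S -> is_walk s.
Proof. by move=> /allP S_gpath /S_gpath; rewrite is_gpathE => /andP[]. Qed.

Lemma walk_cat x0 y0 s1 s2 :
  is_walk s1 -> is_walk s2 -> e (last x0 s1) (head y0 s2) -> is_walk (s1 ++ s2).
Proof.
case: s1 => [|a s1] //= w1; case: s2 => [|b s2] //= w2 adj.
by rewrite cat_path w1 /= adj w2.
Qed.

Lemma walk_cat_split s1 s2 :
  s1 != [::] -> s2 != [::] -> is_walk (s1 ++ s2) -> is_walk s1 /\ is_walk s2.
Proof.
case: s1 => [|a s1] //= _; case: s2 => [|b s2] //= _.
by rewrite cat_path /= => /and3P[-> _ ->].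
Qed.

Lemma cycle_comp_walk_from C c :
  is_cycle_comp e C -> c \in C -> exists2 r, perm_eq C (c :: r) & path e c r.
Proof.
case/andP=> _ /hasP[D]; rewrite mem_permutations => DC cycD cC.
have cD : c \in D by rewrite (perm_mem DC).
have [i r rotD] := rot_to cD.
exists r; first by rewrite -rotD perm_sym perm_rot.
by move: cycD; rewrite -(rot_cycle i) rotD /= rcons_path => /andP[].
Qed.

Hypothesis e_sym : symmetric e.

Lemma walk_rev s : is_walk s -> is_walk (rev s).
Proof.
case: s => [|x p] // wp; rewrite (lastI x p) rev_rcons /= rev_path.
by rewrite (@eq_path _ _ e (fun u v => e_sym v u)).
Qed.

Lemma V1_comp_walk_to Q y : is_walk Q ->
  (is_path_comp e Q && ((y == head y Q) || (y == last y Q)))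
    || (is_cycle_comp e Q && (y \in Q)) ->
  exists2 Q', is_walk Q' /\ perm_eq Q' Q & last y Q' = y.
Proof.
move=> wQ /orP[/andP[_ /orP[/eqP yQ | /eqP yQ]] | /andP[cycQ yQ]].
- by exists (rev Q); rewrite ?walk_rev ?perm_rev ?last_rev.
- by exists Q.
have [r Qr wr] := cycle_comp_walk_from cycQ yQ.
by exists (rev (y :: r)); rewrite ?walk_rev ?last_rev // perm_rev perm_sym.
Qed.

End Walks.

Section MinimalPartitions.
Variables (T : finType) (e : rel T).
Hypothesis e_sym : symmetric e.
Variable S : seq (seq T).
Hypothesis S_pp : is_path_partition e S.
Hypothesis S_min : forall S', is_path_partition e S' -> size S <= size S'.

Lemma pp_replace K R N : perm_eq S (K ++ R) -> all (is_walk e) N ->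
  perm_eq (flatten N) (flatten K) -> is_path_partition e (N ++ R).
Proof.
case: S_pp => S_gpath [S_u S_cover] SKR wN NK.
have NR_S : perm_eq (flatten (N ++ R)) (flatten S).
  by rewrite perm_sym (perm_trans (perm_flatten SKR)) // !flatten_cat perm_cat2r perm_sym.
have NR_u : uniq (flatten (N ++ R)) by rewrite (perm_uniq NR_S).
split; last by split=> // v; rewrite (perm_mem NR_S).
apply/allP=> s; rewrite mem_cat => /orP[sN | sR].
  by rewrite is_gpathE (allP wN _ sN) andbT (uniq_flatten_mem _ NR_u) // mem_cat sN.
by apply: (allP S_gpath); rewrite (perm_mem SKR) mem_cat sR orbT.
Qed.

Lemma min_pp_regroup K N : uniq K -> {subset K <= S} -> all (is_walk e) N ->
  perm_eq (flatten N) (flatten K) -> size K <= size N.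
Proof.
move=> K_u KS wN NK; have [R SKR] := perm_cat_compl K_u KS.
have := S_min (pp_replace SKR wN NK).
by rewrite size_cat (perm_size SKR) size_cat leq_add2r.
Qed.

Section Rerouting.
Variables (P Pc C A' B' : seq T) (x1 x2 c : T).
Hypotheses (Pc_S : Pc \in S) (Pc_P : Pc = P \/ Pc = rev P).
Hypothesis P_AB : P = rcons A' x1 ++ x2 :: B'.
Hypotheses (C_S : C \in S) (C_cyc : is_cycle_comp e C) (c_C : c \in C).
Hypotheses (x1c : e x1 c) (x1c_nsc : ~ same_cycle_comp e S x1 c).

Lemma Pc_AB : perm_eq Pc (rcons A' x1 ++ x2 :: B').
Proof. by rewrite -P_AB; case: Pc_P => ->; rewrite ?perm_rev. Qed.

Lemma x2_Pc : x2 \in Pc.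
Proof. by rewrite (perm_mem Pc_AB) mem_cat inE eqxx orbT. Qed.

Lemma Pc_C : Pc != C.
Proof.
apply: contra_notN x1c_nsc => /eqP PcC; exists C; rewrite // C_cyc c_C -PcC (perm_mem Pc_AB).
by rewrite mem_cat mem_rcons inE eqxx.
Qed.

Lemma AB_walk : is_walk e (rcons A' x1) /\ is_walk e (x2 :: B').
Proof.
have P_walk : is_walk e P.
  by case: Pc_P (mem_gpaths_walk S_pp.1 Pc_S) => -> // /(walk_rev e_sym); rewrite revK.
by apply: walk_cat_split; rewrite -?P_AB // -size_eq0 size_rcons.
Qed.

Lemma comp_end_nonadj Q Q' y : Q \in S -> Q != C -> Q != Pc ->
  is_walk e Q' -> perm_eq Q' Q -> last y Q' = y -> ~~ e y x2.
Proof.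
move=> QS QC QPc wQ' Q'Q Q'_end; apply/negP=> yx2.
have [r C_cr cr_walk] := cycle_comp_walk_from C_cyc c_C.
have [A_walk B_walk] := AB_walk.
suff : 3 <= 2 by [].
apply: (min_pp_regroup (K := [:: Pc; C; Q]) (N := [:: rcons A' x1 ++ c :: r; Q' ++ x2 :: B'])).
- by rewrite /= !inE negb_or Pc_C eq_sym QPc eq_sym QC.
- by apply/allP; rewrite /= Pc_S C_S QS.
- rewrite /= (walk_cat (x0 := x1) (y0 := c)) ?last_rcons //.
  by rewrite (walk_cat (x0 := y) (y0 := x2)) ?Q'_end.
apply/permP=> p; rewrite /= !cats0 !count_cat (permP Pc_AB) (permP C_cr) (permP Q'Q).
by rewrite count_cat [count p Q + _]addnC addnACA.
Qed.

Lemma path_head_nonadj : ~~ e (head x1 A') x2.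
Proof.
apply/negP=> head_x2.
have [r C_cr cr_walk] := cycle_comp_walk_from C_cyc c_C.
have [A_walk B_walk] := AB_walk.
have Acr_walk : is_walk e (rcons A' x1 ++ c :: r).
  by rewrite (walk_cat (x0 := x1) (y0 := c)) ?last_rcons.
suff : 2 <= 1 by [].
apply: (min_pp_regroup (K := [:: Pc; C]) (N := [:: rev (rcons A' x1 ++ c :: r) ++ x2 :: B'])).
- by rewrite /= !inE Pc_C.
- by apply/allP; rewrite /= Pc_S C_S.
- rewrite /= andbT (walk_cat (x0 := x1) (y0 := x2)) ?(walk_rev e_sym Acr_walk) //.
  by rewrite last_rev head_cat headI.
apply/permP=> p; rewrite /= !cats0 !count_cat count_rev (permP Pc_AB) (permP C_cr).
by rewrite !count_cat addnAC.
Qed.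

Lemma V1_nbr_outside_C_is_end Q y : Q \in S ->
  (is_path_comp e Q && ((y == head y Q) || (y == last y Q)))
    || (is_cycle_comp e Q && (y \in Q)) ->
  e x2 y -> ~ same_cycle_comp e S x2 y -> y \notin C -> y = last x2 B'.
Proof.
move=> QS yQ x2y x2y_nsc yNC.
have [Q' [wQ' Q'Q] Q'_end] := V1_comp_walk_to e_sym (mem_gpaths_walk S_pp.1 QS) yQ.
have QC : Q != C.
  by apply: contraNneq yNC => QC; move: yQ; rewrite QC /is_path_comp C_cyc andbF => /andP[].
have [QPc | QNPc] := eqVneq Q Pc; last first.
  by rewrite e_sym (negbTE (comp_end_nonadj QS QC QNPc wQ' Q'Q Q'_end)) in x2y.
move: yQ; rewrite QPc => /orP[/andP[_] | /andP[Pc_cyc yPc]]; last first.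
  by case: x2y_nsc; exists Pc; rewrite // Pc_cyc yPc x2_Pc.
have -> : (y == head y Pc) || (y == last y Pc) = (y == head x1 A') || (y == last x2 B').
  by case: Pc_P => ->; rewrite ?ends_rev P_AB last_cat last_rcons head_cat headI.
case/orP=> /eqP // y_head.
by rewrite e_sym y_head (negbTE path_head_nonadj) in x2y.
Qed.

End Rerouting.
End MinimalPartitions.

Theorem mainTheorem8 (T : finType) (e : rel T)
  (e_sym : symmetric e) (e_irr : irreflexive e)
  (e_reg : forall v : T, #|[set w | e v w]| = 6)
  (S : seq (seq T)) (HS : canonical_pp e S)
  (P : seq T) (HP : P \in S \/ rev P \in S) (HPpath : is_path_comp e P)
  (o1 o2 : T) (Ho1 : head o1 P = o1) (Ho2 : last o2 P = o2)
  (x1 x2 : T) (Hx1 : inV2 e S x1) (Hx2 : inV2 e S x2)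
  (Hprec : exists i, i.+1 < size P /\ nth x1 P i = x1 /\ nth x1 P i.+1 = x2)
  (C : seq T) (HC : C \in S) (HCcyc : is_cycle_comp e C)
  (Hgo : exists2 c, c \in C & goes_to e S x1 c) :
  forall y : T, goes_to e S x2 y -> y = o2 \/ y \in C.
Proof.
move=> y [_ [[Q QS yQ] [[x2y [_ x2y_nsc]] _]]].
case: HS => S_pp S_min _ _.
have [Pc Pc_S Pc_P] : exists2 Pc, Pc \in S & Pc = P \/ Pc = rev P.
  by case: HP => ?; [exists P; [|left] | exists (rev P); [|right]].
case: Hprec => i [lt_i1P [nth_i nth_i1]].
have P_AB := split_at_nth x1 lt_i1P; rewrite nth_i nth_i1 in P_AB.
case: Hgo => c cC [_ [_ [[x1c [_ x1c_nsc]] _]]].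
have [yC | yNC] := boolP (y \in C); [by right | left].
rewrite (V1_nbr_outside_C_is_end e_sym S_pp S_min Pc_S Pc_P P_AB HC HCcyc cC x1c x1c_nsc
  QS yQ x2y x2y_nsc yNC).
by rewrite -Ho2 {2}P_AB last_cat last_rcons.
Qed.
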